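(* Suppose that for every admissible set $\mathcal{H}$ with $|\mathcal{H}| = 3$, the difference set $\mathcal{D}(\mathcal{H})$ contains a weak Polignac number. Then \[ \liminf_{x \to \infty} \frac{\mathcal{P}(x)}{x} \;\geq\; \frac{1}{6}. \]
   Context: A positive integer $d$ is a weak Polignac number if there are infinitely many pairs of primes $(p,q)$ with $q - p = d$. For real $x$, $\mathcal{P}(x)$ denotes the number of weak Polignac numbers less than or equal to $x$. A finite set of integers $\mathcal{H} = \{h_1, \ldots, h_k\}$ is admissible if for every prime $p$ there is an integer $m$ with $h_i \not\equiv m \pmod p$ for all $1 \le i \le k$. Its difference set is $\mathcal{D}(\mathcal{H}) = \{h_j - h_i : h_i, h_j \in \mathcal{H},\ h_i < h_j\}$. *)

From Stdlib Require Import Reals ZArith Znumtheory List Classical ClassicalEpsilon.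
Import ListNotations.
Open Scope R_scope.

(* Since q = p + d is
   determined by p, infinitely many pairs <-> unboundedly large such p. *)
Definition weak_polignac (d : nat) : Prop :=
  (0 < d)%nat /\
  forall N : nat, exists p : nat,
    (N <= p)%nat /\ prime (Z.of_nat p) /\ prime (Z.of_nat p + Z.of_nat d)%Z.

Definition decP (P : Prop) : bool :=
  if excluded_middle_informative P then true else false.

(* P(x) = number of weak Polignac numbers d with d <= x.
   Every positive integer d <= x lies in [1, up x), which the list covers. *)
Definition polignac_count (x : R) : nat :=
  length (filter (fun d => decP (weak_polignac d /\ INR d <= x))
                 (seq 1 (Z.to_nat (up x)))).

Definition admissible (H : list Z) : Prop :=
  forall p : Z, prime p ->
    exists m : Z, forall h : Z, In h H -> ~ (p | h - m)%Z.

Definition in_diff_set (H : list Z) (n : Z) : Prop :=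
  exists hi hj : Z, In hi H /\ In hj H /\ (hi < hj)%Z /\ n = (hj - hi)%Z.

(* Take H = {0, 2a, 2a + 6c}: it is admissible for all a, c, and its differences are 2a, 6c
   and 2a + 6c.  If every multiple of 6 is a weak Polignac number, then P(x) >= x/6 - 1.
   Otherwise fix c with 6c not a weak Polignac number; then for every a one of 2a, 2a + 6c
   is, and both lie below x when a <= (x - 6c)/2, so 2 P(x) >= (x - 6c)/2 - 1 and
   P(x)/x tends to at least 1/4. *)
From Stdlib Require Import Reals ZArith Znumtheory List Lia Lra Classical ClassicalEpsilon FinFun.
Import ListNotations.
Open Scope R_scope.

Lemma decP_spec (P : Prop) : decP P = true <-> P.
Proof.
  unfold decP; destruct excluded_middle_informative; split; intros; try tauto; discriminate.
Qed.

Lemma exists_nat_floor (y : R) : 0 <= y -> exists K : nat, INR K <= y /\ y - 1 < INR K.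
Proof.
  intros Hy. destruct (archimed y) as [H1 H2].
  assert (0 < up y)%Z by (apply lt_IZR; simpl; lra).
  exists (Z.to_nat (up y - 1)).
  rewrite INR_IZR_INZ, Z2Nat.id by lia. rewrite minus_IZR. simpl. lra.
Qed.

Lemma length_le_filter_or {A : Type} (f g : A -> bool) (l : list A) :
  (forall a, In a l -> f a = true \/ g a = true) ->
  (length l <= length (filter f l) + length (filter g l))%nat.
Proof.
  induction l as [|b l IH]; simpl; intros Hl; [lia|].
  specialize (IH (fun a Ha => Hl a (or_intror Ha))).
  destruct (Hl b (or_introl eq_refl)) as [E|E]; rewrite E;
  destruct (f b), (g b); simpl; lia.
Qed.

Lemma exists_residue_avoiding (p : Z) (R : list Z) :
  (Z.of_nat (length R) < p)%Z -> exists m : Z, forall r, In r R -> ~ (p | r - m)%Z.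
Proof.
  intros Hlen. apply NNPP. intros Hno.
  assert (Hcover : incl (seq 0 (Z.to_nat p)) (map (fun r => Z.to_nat (r mod p)) R)).
  { intros k Hk. apply in_seq in Hk.
    apply NNPP. intros Hk'. apply Hno. exists (Z.of_nat k). intros r Hr Hdiv.
    apply Hk', in_map_iff. exists r. split; [|exact Hr].
    rewrite (Zdivide_mod_minus r p (Z.of_nat k)); [lia | | exact Hdiv].
    split; [lia|]. apply (Z.lt_le_trans _ (Z.of_nat (Z.to_nat p))); lia. }
  apply NoDup_incl_length in Hcover; [|apply seq_NoDup].
  rewrite length_seq, length_map in Hcover. lia.
Qed.

(* Every element of H is congruent mod p to an element of R, so a residue avoiding R
   avoids H; R is a single class for p = 2, the two classes {0, 2a} for p = 3, and H
   itself for p >= 5. *)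
Lemma admissible_zero_2a_2a6c (a c : Z) : admissible [0; 2*a; 2*a + 6*c]%Z.
Proof.
  intros p Hp.
  assert (Hp2 : (2 <= p)%Z) by (destruct Hp; lia).
  assert (Htransfer : forall R, (Z.of_nat (length R) < p)%Z ->
    (forall h, In h [0; 2*a; 2*a + 6*c]%Z -> exists r, In r R /\ (p | h - r)%Z) ->
    exists m, forall h, In h [0; 2*a; 2*a + 6*c]%Z -> ~ (p | h - m)%Z).
  { intros R HR Hcong. destruct (exists_residue_avoiding p R HR) as [m Hm].
    exists m. intros h Hh Hdiv. destruct (Hcong h Hh) as [r [Hr Hhr]].
    apply (Hm r Hr). replace (r - m)%Z with ((h - m) - (h - r))%Z by ring.
    now apply Z.divide_sub_r. }
  destruct (Z.eq_dec p 2) as [->|N2]; [|destruct (Z.eq_dec p 3) as [->|N3]].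
  - apply (Htransfer [0%Z]); [simpl; lia|].
    intros h Hh. exists 0%Z. split; [now left|].
    destruct Hh as [<-|[<-|[<-|[]]]]; [exists 0%Z | exists a | exists (a + 3*c)%Z]; ring.
  - apply (Htransfer [0; 2*a]%Z); [simpl; lia|].
    intros h Hh. destruct Hh as [<-|[<-|[<-|[]]]].
    + exists 0%Z. split; [now left|]. exists 0%Z; ring.
    + exists (2*a)%Z. split; [right; now left|]. exists 0%Z; ring.
    + exists (2*a)%Z. split; [right; now left|]. exists (2*c)%Z; ring.
  - assert (Hp5 : (4 <= p)%Z) by lia.
    apply (Htransfer [0; 2*a; 2*a + 6*c]%Z); [simpl; lia|].
    intros h Hh. exists h. split; [exact Hh|]. exists 0%Z; ring.
Qed.

Lemma polignac_gap_triple :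
  (forall H : list Z, NoDup H -> length H = 3%nat -> admissible H ->
     exists d : nat, weak_polignac d /\ in_diff_set H (Z.of_nat d)) ->
  forall a c : nat, (1 <= a)%nat -> (1 <= c)%nat ->
  weak_polignac (2*a) \/ weak_polignac (2*a + 6*c) \/ weak_polignac (6*c).
Proof.
  intros Hyp a c Ha Hc.
  destruct (Hyp [0; 2 * Z.of_nat a; 2 * Z.of_nat a + 6 * Z.of_nat c]%Z)
    as [d [Hd [hi [hj [Hi [Hj [Hlt Heq]]]]]]].
  - repeat constructor; cbn [In]; lia.
  - reflexivity.
  - apply admissible_zero_2a_2a6c.
  - destruct Hi as [<-|[<-|[<-|[]]]]; destruct Hj as [<-|[<-|[<-|[]]]]; try lia.
    + left. replace (2*a)%nat with d by lia. exact Hd.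
    + right; left. replace (2*a + 6*c)%nat with d by lia. exact Hd.
    + right; right. replace (6*c)%nat with d by lia. exact Hd.
Qed.

Lemma length_le_polignac_count (x : R) (l : list nat) :
  NoDup l -> (forall d, In d l -> weak_polignac d /\ INR d <= x) ->
  (length l <= polignac_count x)%nat.
Proof.
  intros Hnd Hl. unfold polignac_count.
  apply NoDup_incl_length; [exact Hnd|].
  intros d Hd. destruct (Hl d Hd) as [Hpol Hdx].
  apply filter_In. split.
  - apply in_seq. destruct Hpol as [Hpos _]. destruct (archimed x) as [Hup _].
    assert (Z.of_nat d < up x)%Z by (apply lt_IZR; rewrite <- INR_IZR_INZ; lra).
    lia.
  - now apply decP_spec.
Qed.

Lemma polignac_image_le_count (x : R) (f : nat -> nat) (K : nat) :
  Injective f -> (forall a, (1 <= a <= K)%nat -> INR (f a) <= x) ->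
  (length (filter (fun a => decP (weak_polignac (f a))) (seq 1 K)) <= polignac_count x)%nat.
Proof.
  intros Hinj Hle. rewrite <- (length_map f).
  apply length_le_polignac_count.
  - apply Injective_map_NoDup; [exact Hinj|]. apply NoDup_filter, seq_NoDup.
  - intros d Hd. apply in_map_iff in Hd as [a [<- Ha]].
    apply filter_In in Ha as [Ha Hpol]. apply in_seq in Ha.
    split; [now apply decP_spec | apply Hle; lia].
Qed.

Lemma polignac_count_ge_multiples (k : nat) :
  (0 < k)%nat -> (forall c, (1 <= c)%nat -> weak_polignac (k*c)) ->
  forall x, 0 <= x -> / INR k * x - 1 <= INR (polignac_count x).
Proof.
  intros Hk Hall x Hx.
  assert (Hk' : 0 < INR k) by (apply lt_0_INR; lia).
  destruct (exists_nat_floor (x / INR k)) as [K [HK1 HK2]].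
  { unfold Rdiv. apply Rmult_le_pos; [lra|]. left. now apply Rinv_0_lt_compat. }
  assert (HK : (K <= polignac_count x)%nat).
  { assert (Hid : filter (fun c => decP (weak_polignac (k*c))) (seq 1 K) = seq 1 K).
    { apply forallb_filter_id, forallb_forall. intros c Hc. apply in_seq in Hc.
      apply decP_spec, Hall; lia. }
    rewrite <- (length_seq K 1), <- Hid.
    apply polignac_image_le_count.
    - intros u v Huv. apply (Nat.mul_cancel_l _ _ k); lia.
    - intros c Hc. rewrite mult_INR.
      assert (INR c <= INR K) by (apply le_INR; lia).
      apply (Rmult_le_reg_r (/ INR k)); [now apply Rinv_0_lt_compat|].
      rewrite Rmult_comm, <- Rmult_assoc, Rinv_l, Rmult_1_l by lra.
      unfold Rdiv in HK1. lra. }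
  apply le_INR in HK. unfold Rdiv in HK2. lra.
Qed.

Lemma polignac_count_ge_quarter (b : nat) :
  (forall a, (1 <= a)%nat -> weak_polignac (2*a) \/ weak_polignac (2*a + b)) ->
  forall x, INR b <= x -> / 4 * x - (INR b / 4 + 1 / 2) <= INR (polignac_count x).
Proof.
  intros Hor x Hx.
  destruct (exists_nat_floor ((x - INR b) / 2)) as [K [HK1 HK2]]; [lra|].
  assert (Hshift_le : forall a, (1 <= a <= K)%nat -> INR (2*a + b) <= x).
  { intros a Ha. rewrite plus_INR, mult_INR.
    assert (INR a <= INR K) by (apply le_INR; lia). simpl. lra. }
  assert (Hsplit := length_le_filter_or
    (fun a => decP (weak_polignac (2*a))) (fun a => decP (weak_polignac (2*a + b)))
    (seq 1 K)).
  rewrite length_seq in Hsplit.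
  assert (HK : (K <= 2 * polignac_count x)%nat).
  { enough (length (filter (fun a => decP (weak_polignac (2*a))) (seq 1 K))
              <= polignac_count x /\
            length (filter (fun a => decP (weak_polignac (2*a + b))) (seq 1 K))
              <= polignac_count x)%nat.
    { assert (K <= length (filter (fun a => decP (weak_polignac (2*a))) (seq 1 K))
                 + length (filter (fun a => decP (weak_polignac (2*a + b))) (seq 1 K)))%nat;
      [|lia].
      apply Hsplit. intros a Ha. apply in_seq in Ha.
      destruct (Hor a ltac:(lia)); [left | right]; now apply decP_spec. }
    split; apply polignac_image_le_count; try (intros u v; lia).
    - intros a Ha. specialize (Hshift_le a Ha).
      assert (INR (2*a) <= INR (2*a + b)) by (apply le_INR; lia). lra.
    - exact Hshift_le. }
  apply le_INR in HK. rewrite mult_INR in HK. simpl in HK. lra.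
Qed.

Lemma ratio_eventually_ge (f : R -> R) (alpha beta x0 : R) :
  (forall x, x0 <= x -> alpha * x - beta <= f x) ->
  forall eps, 0 < eps -> exists N, forall x, N <= x -> alpha - eps <= f x / x.
Proof.
  intros Hf eps Heps.
  exists (Rmax x0 (Rabs beta / eps) + 1). intros x Hx.
  assert (Hx0 : x0 <= x) by (pose proof (Rmax_l x0 (Rabs beta / eps)); lra).
  assert (Hbx : Rabs beta / eps < x) by (pose proof (Rmax_r x0 (Rabs beta / eps)); lra).
  assert (Hpos : 0 <= Rabs beta / eps) by (unfold Rdiv; apply Rmult_le_pos;
      [apply Rabs_pos | left; now apply Rinv_0_lt_compat]).
  assert (Hbeta : beta <= eps * x).
  { apply (Rmult_lt_compat_l eps) in Hbx; [|lra].
    unfold Rdiv in Hbx. rewrite Rmult_comm, Rmult_assoc, Rinv_l, Rmult_1_r in Hbx by lra.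
    pose proof (Rle_abs beta). lra. }
  apply (Rmult_le_reg_r x); [lra|].
  unfold Rdiv. rewrite Rmult_assoc, Rinv_l, Rmult_1_r by lra.
  specialize (Hf x Hx0). nra.
Qed.

Theorem mainTheorem3 :
  (forall H : list Z, NoDup H -> length H = 3%nat -> admissible H ->
     exists d : nat, weak_polignac d /\ in_diff_set H (Z.of_nat d)) ->
  (* liminf_{x -> oo} P(x)/x >= 1/6 *)
  forall eps : R, 0 < eps ->
    exists N : R, forall x : R, N <= x ->
      1 / 6 - eps <= INR (polignac_count x) / x.
Proof.
  intros Hyp eps Heps.
  destruct (classic (forall c, (1 <= c)%nat -> weak_polignac (6*c))) as [Hall|Hnot].
  - destruct (ratio_eventually_ge (fun x => INR (polignac_count x)) (/ INR 6) 1 0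
                (polignac_count_ge_multiples 6 ltac:(lia) Hall) eps Heps) as [N HN].
    exists N. intros x Hx. specialize (HN x Hx). simpl in HN. lra.
  - apply not_all_ex_not in Hnot as [c Hc].
    apply imply_to_and in Hc as [Hc1 Hc2].
    assert (Hor : forall a, (1 <= a)%nat ->
              weak_polignac (2*a) \/ weak_polignac (2*a + 6*c)).
    { intros a Ha. destruct (polignac_gap_triple Hyp a c Ha Hc1) as [|[|]]; tauto. }
    destruct (ratio_eventually_ge (fun x => INR (polignac_count x)) (/ 4) _ _
                (polignac_count_ge_quarter (6*c) Hor) eps Heps) as [N HN].
    exists N. intros x Hx. specialize (HN x Hx). simpl in HN. lra.
Qed.
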